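(* Let $\mathcal{X}$ and $\mathcal{Y}$ be infinite-dimensional Banach spaces with Schauder bases $\{x_n\}_{n\ge1}$ and $\{y_n\}_{n\ge1}$, and let $\mathcal{F}$ be a universal approximator. For every continuous (non-linear) operator $f:\mathcal{X}\to\mathcal{Y}$, every $\varepsilon>0$ and every compact $K\subseteq\mathcal{X}$ there exist $n,N,\tilde Q\in\mathbb{N}_+$, $\hat f\in\bigcup_c\mathcal{F}_{n,N,c}$ and real numbers $\tilde z_{j,i}$ ($j\le N$, $i\le\tilde Q$) such that $$\hat t(x)=\sum_{j=1}^N\sum_{i=1}^{\tilde Q}\Big[P_{\Delta_N}\circ\hat f\big((\beta^x_k)_{k=1}^n\big)\Big]_j\,\tilde z_{j,i}\,y_i$$ satisfies $\sup_{x\in K}\|f(x)-\hat t(x)\|_{\mathcal{Y}}<\varepsilon$, where $x=\sum_k\beta^x_kx_k$ is the Schauder expansion of $x$.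
   Context: $P_{\Delta_N}$ is the Euclidean orthogonal projection of $\mathbb{R}^N$ onto the simplex $\Delta_N$. A universal approximator is a family $\mathcal{F}=\{\mathcal{F}_{n,m,c}\}$ of sets of maps $\mathbb{R}^n\to\mathbb{R}^m$, nested in $c$, with a rate function $r(\omega,K,n,m,c)$ decreasing to $0$ in $c$, such that every uniformly continuous $f:\mathbb{R}^n\to\mathbb{R}^m$ with continuous modulus $\omega$ is approximated on every compact $K$ within $r(\omega,K,n,m,c)$ by some element of $\mathcal{F}_{n,m,c}$. *)

From HB Require Import structures.
From mathcomp Require Import all_boot all_order all_algebra.
From mathcomp Require Import all_classical all_reals all_analysis.
Set Implicit Arguments. Unset Strict Implicit. Unset Printing Implicit Defensive.
Import Order.TTheory GRing.Theory Num.Theory.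
Import numFieldNormedType.Exports.
Local Open Scope classical_set_scope.
Local Open Scope ring_scope.

Definition eucl_norm {R : realType} {n : nat} (v : 'rV[R]_n) : R :=
  Num.sqrt (\sum_(j < n) (v 0 j) ^+ 2).

Definition simplex {R : realType} (N : nat) : set 'rV[R]_N :=
  [set p | (forall j, 0 <= p 0 j) /\ \sum_(j < N) p 0 j = 1].

Definition is_simplex_proj {R : realType} {N : nat} (v p : 'rV[R]_N) : Prop :=
  @simplex R N p /\ forall q, @simplex R N q -> eucl_norm (v - p) <= eucl_norm (v - q).

(* P_{Delta_N}: the (unique, when N > 0) Euclidean projection onto Delta_N. *)
Definition proj_simplex {R : realType} {N : nat} (v : 'rV[R]_N) : 'rV[R]_N :=
  xget 0 [set p | is_simplex_proj v p].

Definition cont_modulus {R : realType} {n m : nat}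
  (omega : R -> R) (g : 'rV[R]_n -> 'rV[R]_m) : Prop :=
  continuous omega /\ omega 0 = 0 /\
  forall x y, eucl_norm (g x - g y) <= omega (eucl_norm (x - y)).

Definition universal_approximator {R : realType}
  (F : forall n m : nat, nat -> set ('rV[R]_n -> 'rV[R]_m)) : Prop :=
  (forall n m (c c' : nat), (c <= c')%N -> F n m c `<=` F n m c') /\
  exists r : forall n m : nat, (R -> R) -> set 'rV[R]_n -> nat -> R,
    (forall n m omega (K : set 'rV[R]_n), continuous omega -> compact K ->
       {homo r n m omega K : c c' / (c <= c')%N >-> c' <= c} /\
       r n m omega K @ \oo --> 0) /\
    (forall n m (g : 'rV[R]_n -> 'rV[R]_m) omega (K : set 'rV[R]_n) (c : nat),
       cont_modulus omega g -> compact K ->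
       exists2 h, F n m c h &
         forall x, K x -> eucl_norm (g x - h x) <= r n m omega K c).

Definition schauder_partial {R : realType} {X : normedModType R}
  (b : nat -> X) (beta : nat -> R) (k : nat) : X :=
  \sum_(0 <= i < k) beta i *: b i.

Definition schauder_basis {R : realType} {X : normedModType R} (b : nat -> X) : Prop :=
  forall x : X,
    (exists beta : nat -> R, schauder_partial b beta @ \oo --> x) /\
    (forall beta gamma : nat -> R,
       schauder_partial b beta @ \oo --> x ->
       schauder_partial b gamma @ \oo --> x -> beta = gamma).

Definition schauder_coef {R : realType} {X : normedModType R}
  (b : nat -> X) (x : X) : nat -> R :=
  xget (fun=> 0) [set beta | schauder_partial b beta @ \oo --> x].

(* The vector (beta^x_k)_{k=1}^n (0-indexed here). *)
Definition coef_vec {R : realType} {X : normedModType R}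
  (b : nat -> X) (n : nat) (x : X) : 'rV[R]_n :=
  \row_(k < n) schauder_coef b x k.

(* The partial-sum projections P_n of a Schauder basis are uniformly bounded
   (Baire category theorem for the sets {x | sup_n |P_n x| <= m}), so the
   coefficient maps are continuous and P_n -> id uniformly on compact sets.
   Cover K by finitely many balls B(c_j, d_j / 2) such that f varies by less
   than eps / 4 on each B(c_j, d_j), and score the centres by
   s_j(x) = -(8 / d_j) |P_n x - c_j|, a Lipschitz function of the first n
   coefficients of x.  The projection onto the simplex vanishes on every
   coordinate lying at least 1 below the largest one, so applied to a uniform
   1/2-approximation of the scores it only charges centres with |c_j - x| < d_j.
   The output is then a convex combination of truncated expansions of the
   f(c_j), each within eps / 2 of f(x). *)

From HB Require Import structures.
From mathcomp Require Import all_boot all_order all_algebra.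
From mathcomp Require Import all_classical all_reals all_analysis.
From mathcomp Require Import ring lra.
Import Order.TTheory GRing.Theory Num.Theory.
Import numFieldNormedType.Exports.
Local Open Scope classical_set_scope.
Local Open Scope ring_scope.

Lemma lipschitz_continuous {R : realFieldType} {V W : normedModType R}
    {f : V -> W} {k : R} :
  (forall x y, `|f x - f y| <= k * `|x - y|) -> continuous f.
Proof.
move=> fk x; apply/cvgrPdist_le => e e0.
have k1_gt0 : 0 < `|k| + 1 by rewrite ltr_wpDl.
near=> y; apply: le_trans (fk _ _) _.
have xy : `|x - y| <= e / (`|k| + 1).
  by near: y; apply: cvgr_dist_le; [exact: cvg_id | rewrite divr_gt0].
apply: le_trans (ler_wpM2r (normr_ge0 _) (ler_norm k)) _.
apply: le_trans (ler_wpM2l (normr_ge0 _) xy) _.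
by rewrite mulrA ler_pdivrMr // mulrDr mulr1 mulrC lerDl ltW.
Unshelve. all: by end_near. Qed.

Lemma sum_sqr_le_sqr_sum (R : realDomainType) (I : Type) (s : seq I) (F : I -> R) :
  (forall i, 0 <= F i) -> \sum_(i <- s) F i ^+ 2 <= (\sum_(i <- s) F i) ^+ 2.
Proof.
move=> F0; elim: s => [|a s IH]; first by rewrite !big_nil expr0n.
have S0 : 0 <= \sum_(i <- s) F i by apply: sumr_ge0.
by rewrite !big_cons; have := F0 a; nra.
Qed.

Section EuclideanNorm.
Context {R : realType} {n : nat}.
Implicit Types a b : 'rV[R]_n.

Lemma ler_eucl_norm a b :
  (eucl_norm a <= eucl_norm b) = (\sum_j a 0 j ^+ 2 <= \sum_j b 0 j ^+ 2).
Proof. by rewrite ler_sqrt // sumr_ge0 // => j _; exact: sqr_ge0. Qed.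

Lemma normr_coord_le_eucl_norm a j : `|a 0 j| <= eucl_norm a.
Proof.
rewrite /eucl_norm -sqrtr_sqr ler_sqrt ?sumr_ge0 // => [|i _]; last exact: sqr_ge0.
by rewrite (bigD1 j) //= lerDl sumr_ge0 // => i _; exact: sqr_ge0.
Qed.

Lemma eucl_norm_le_sum_normr a : eucl_norm a <= \sum_j `|a 0 j|.
Proof.
rewrite /eucl_norm -[X in _ <= X]ger0_norm ?sumr_ge0 // -sqrtr_sqr.
rewrite ler_sqrt ?sqr_ge0 //.
under eq_bigr do rewrite -real_normK ?num_real //.
exact: sum_sqr_le_sqr_sum.
Qed.

End EuclideanNorm.

Lemma maxr0_cases {R : realDomainType} (c : R) :
  (0 <= c /\ Num.max c 0 = c) \/ (c < 0 /\ Num.max c 0 = 0).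
Proof.
have [c0|c0] := leP 0 c; first by left; split => //; apply/max_idPl.
by right; split => //; apply/max_idPr/ltW.
Qed.

Section SimplexProjection.
Context {R : realType} {N : nat}.
Implicit Types (u p q : 'rV[R]_N) (t : R).

Definition threshold_proj u t : 'rV[R]_N := \row_j Num.max (u 0 j - t) 0.

Definition threshold_mass u t : R := \sum_j Num.max (u 0 j - t) 0.

Lemma threshold_proj_simplex {u t} : threshold_mass u t = 1 -> simplex (threshold_proj u t).
Proof.
move=> mass1; split => [j|]; first by rewrite mxE le_max lexx orbT.
by rewrite -mass1; apply: eq_bigr => j _; rewrite mxE.
Qed.

(* Obtuse-angle inequality: (u - p)_j >= t, with equality where p_j > 0,
   while sum_j (p_j - q_j) = 0. *)
Lemma threshold_proj_pythagoras {u t q} : threshold_mass u t = 1 -> simplex q ->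
  \sum_j ((u - threshold_proj u t) 0 j) ^+ 2
    + \sum_j ((threshold_proj u t - q) 0 j) ^+ 2 <= \sum_j ((u - q) 0 j) ^+ 2.
Proof.
move=> mass1 [q_ge0 q_sum1]; set p := threshold_proj u t.
have coord j : ((u - p) 0 j) ^+ 2 + ((p - q) 0 j) ^+ 2 + 2 * t * (p 0 j - q 0 j)
    <= ((u - q) 0 j) ^+ 2.
  rewrite !mxE; have := q_ge0 j.
  by case: (maxr0_cases (u 0 j - t)) => [[ut ->]|[ut ->]] qj; nra.
have p_sum1 : \sum_j p 0 j = 1 by case: (threshold_proj_simplex mass1).
have := ler_sum (index_enum _) (fun j _ => coord j) : \sum_j _ <= \sum_j _.
by rewrite !big_split /= -mulr_sumr sumrB p_sum1 q_sum1 subrr mulr0 addr0.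
Qed.

Lemma proj_simplex_threshold {u t} :
  threshold_mass u t = 1 -> proj_simplex u = threshold_proj u t.
Proof.
move=> mass1; set p := threshold_proj u t.
have sq_ge0 (a : 'rV[R]_N) : 0 <= \sum_j (a 0 j) ^+ 2.
  by apply: sumr_ge0 => j _; exact: sqr_ge0.
have p_proj : is_simplex_proj u p.
  split=> [|q q_simplex]; first exact: threshold_proj_simplex.
  rewrite ler_eucl_norm; apply: le_trans (threshold_proj_pythagoras mass1 q_simplex).
  by rewrite lerDl.
have [p'_simplex p'_min] : is_simplex_proj u (proj_simplex u).
  by apply: (xgetPex 0); exists p.
have := p'_min p (threshold_proj_simplex mass1); rewrite ler_eucl_norm => le1.
have le2 := threshold_proj_pythagoras mass1 p'_simplex.
have dist0 : \sum_j ((p - proj_simplex u) 0 j) ^+ 2 = 0.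
  by apply/eqP; rewrite eq_le sq_ge0 andbT; lra.
apply/matrixP => i j; rewrite (ord1 i).
have /eqP := @psumr_eq0P _ _ _ _ (fun j _ => sqr_ge0 _) dist0 j isT.
by rewrite !mxE sqrf_eq0 subr_eq0 => /eqP.
Qed.

Lemma threshold_mass_lipschitz u s t :
  `|threshold_mass u s - threshold_mass u t| <= N%:R * `|s - t|.
Proof.
rewrite -sumrB (le_trans (ler_norm_sum _ _ _)) //.
have -> : N%:R * `|s - t| = \sum_(j < N) `|s - t|.
  by rewrite sumr_const card_ord mulr_natl.
apply: ler_sum => j _.
case: (maxr0_cases (u 0 j - s)) => [[us ->]|[us ->]];
  case: (maxr0_cases (u 0 j - t)) => [[ut ->]|[ut ->]].
- rewrite (_ : _ - _ = t - s); last by ring.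
  by rewrite distrC.
- by rewrite subr0 ger0_norm // distrC; have := ler_norm (t - s); lra.
- by rewrite sub0r normrN ger0_norm //; have := ler_norm (s - t); lra.
- by rewrite subrr normr0.
Qed.

Lemma coord_le_threshold_mass u t j : u 0 j - t <= threshold_mass u t.
Proof.
rewrite /threshold_mass (bigD1 j) //=.
apply: le_trans (_ : _ <= Num.max (u 0 j - t) 0) _; first by rewrite le_max lexx.
by rewrite lerDl sumr_ge0 // => i _; rewrite le_max lexx orbT.
Qed.

(* The mass is continuous, vanishes at [t = S] and is at least 1 at
   [t = - S - 1], where [S = sum_j |u_j|]. *)
Lemma exists_threshold u : (0 < N)%N ->
  exists t, threshold_mass u t = 1 /\ forall j, u 0 j - 1 <= t.
Proof.
move=> N_gt0; set S := \sum_(j < N) `|u 0 j|.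
have S_ge0 : 0 <= S by rewrite sumr_ge0.
have uS j : `|u 0 j| <= S by rewrite /S (bigD1 j) //= lerDl sumr_ge0.
have mass_S : threshold_mass u S = 0.
  apply: big1 => j _; apply/max_idPr.
  by rewrite subr_le0 (le_trans (ler_norm _)).
have mass_NS : 1 <= threshold_mass u (- S - 1).
  apply: le_trans (coord_le_threshold_mass u _ (Ordinal N_gt0)).
  have := uS (Ordinal N_gt0); have := ler_norm (- u 0 (Ordinal N_gt0)).
  by rewrite normrN; lra.
have [t _ mass1] : exists2 t, t \in `[- S - 1, S] & threshold_mass u t = 1.
  apply: IVT; first lra.
    apply: continuous_subspaceT => s.
    exact: (lipschitz_continuous (threshold_mass_lipschitz u)).
  by rewrite mass_S ge_min le_max ler01 mass_NS orbT.
exists t; split => // j; rewrite leNgt; apply/negP => ut.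
by have := coord_le_threshold_mass u t j; rewrite mass1; lra.
Qed.

Lemma proj_simplex_simplex u : (0 < N)%N -> simplex (proj_simplex u).
Proof.
move=> N_gt0; have [t [mass1 _]] := exists_threshold u N_gt0.
by rewrite (proj_simplex_threshold mass1); exact: threshold_proj_simplex.
Qed.

Lemma proj_simplex_eq0 u (k j : 'I_N) :
  u 0 k + 1 <= u 0 j -> proj_simplex u 0 k = 0.
Proof.
move=> ukj; have N_gt0 : (0 < N)%N by case: N k {ukj j u} => [[]|].
have [t [mass1 t_ge]] := exists_threshold u N_gt0.
rewrite (proj_simplex_threshold mass1) mxE; apply/max_idPr.
by have := t_ge j; lra.
Qed.

Lemma proj_simplex_eq0_near (u s : 'rV[R]_N) (j k : 'I_N) :
  (forall i, `|u 0 i - s 0 i| <= 2^-1) -> s 0 k + 2 <= s 0 j ->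
  proj_simplex u 0 k = 0.
Proof.
move=> us skj; apply: (proj_simplex_eq0 _ _ j).
by have := us j; have := us k; rewrite !ler_norml; lra.
Qed.

End SimplexProjection.

Section CauchyBound.
Context {R : realType} {V : normedModType R}.

Lemma cvg_dist_le_of_cauchy_bound (a : nat -> V) (l : V) (B : R) I :
  a @ \oo --> l -> (forall J, (I <= J)%N -> `|a I - a J| <= B) -> `|l - a I| <= B.
Proof.
move=> al aB.
have dist_cvg : `|a J - a I| @[J --> \oo] --> `|l - a I|.
  by apply: cvg_norm; apply: cvgB => //; exact: cvg_cst.
apply: (closed_cvg _ (@closed_le _ B) _ _ dist_cvg).
by exists I => // J /= IJ; rewrite distrC; exact: aB.
Qed.

Lemma cauchy_bound_cvg (W : completeNormedModType R) (a : nat -> W) (B : nat -> R) :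
  B @ \oo --> 0 -> (forall I J, (I <= J)%N -> `|a I - a J| <= B I) -> cvgn a.
Proof.
move=> B0 aB; apply: cauchy_cvg; apply: cauchy_exP => eps eps_gt0.
have [I0 _ BI0] := cvgr_dist_lt _ _ B0 _ eps_gt0.
exists (a I0); exists I0 => // J /= I0J; rewrite -ball_normE /ball_ /=.
apply: le_lt_trans (aB _ _ I0J) _.
by have := BI0 I0 (leqnn _); rewrite sub0r normrN; exact: le_lt_trans (ler_norm _).
Qed.

Lemma half_pow_cauchy {a : nat -> V} {c : R} :
  (forall i, `|a i - a i.+1| <= c * 2^-1 ^+ i) ->
  forall I J, (I <= J)%N -> `|a I - a J| <= c *+ 2 * 2^-1 ^+ I.
Proof.
move=> a_step I J /subnKC <-; move: (J - I)%N => d.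
have c_ge0 : 0 <= c by have := a_step 0%N; rewrite expr0 mulr1; exact: le_trans.
suff : `|a I - a (I + d)%N| <= c *+ 2 * (2^-1 ^+ I - 2^-1 ^+ (I + d)).
  by move/le_trans; apply; rewrite ler_wpM2l ?mulrn_wge0 // gerBl exprn_ge0.
elim: d => [|d IH]; first by rewrite addn0 !subrr mulr0 normr0.
rewrite addnS (_ : a I - _ = a I - a (I + d)%N + (a (I + d)%N - a (I + d).+1)).
  apply: le_trans (ler_normD _ _) _; apply: le_trans (lerD IH (a_step _)) _.
  by rewrite exprS; lra.
by rewrite addrA subrK.
Qed.

End CauchyBound.

Section SchauderBasis.
Context {R : realType} {X : completeNormedModType R} {b : nat -> X}.
Hypothesis b_basis : schauder_basis b.
Implicit Types x y z : X.

Local Notation coef := (schauder_coef b).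
Local Notation partial := (schauder_partial b).

Definition basis_proj (n : nat) x : X := partial (coef x) n.

Lemma basis_proj_cvg x : basis_proj n x @[n --> \oo] --> x.
Proof.
rewrite /basis_proj /schauder_coef.
by apply: (@xgetPex _ (fun=> 0) [set beta | partial beta @ \oo --> x]); case: (b_basis x).
Qed.

Lemma schauder_coef_unique {x beta} : partial beta @ \oo --> x -> beta = coef x.
Proof. by move=> beta_x; case: (b_basis x) => _ /(_ beta (coef x) beta_x (basis_proj_cvg x)). Qed.

Lemma schauder_partial_lin a (beta gamma : nat -> R) n :
  partial (fun k => a * beta k + gamma k) n = a *: partial beta n + partial gamma n.
Proof.
rewrite /schauder_partial scaler_sumr -big_split /=; apply: eq_bigr => i _.
by rewrite scalerDl scalerA.
Qed.

Lemma schauder_coef_lin a x y : coef (a *: x + y) = (fun k => a * coef x k + coef y k).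
Proof.
apply/esym/schauder_coef_unique.
under [X in X @ _]funext do rewrite schauder_partial_lin.
by apply: cvgD; [apply: cvgZ; [exact: cvg_cst|] |]; exact: basis_proj_cvg.
Qed.

Lemma schauder_coefB x y k : coef (x - y) k = coef x k - coef y k.
Proof.
by rewrite (_ : x - y = (-1) *: y + x) ?schauder_coef_lin ?mulN1r 1?addrC // scaleN1r.
Qed.

Lemma basis_proj_lin a x y n :
  basis_proj n (a *: x + y) = a *: basis_proj n x + basis_proj n y.
Proof. by rewrite /basis_proj schauder_coef_lin schauder_partial_lin. Qed.

Lemma basis_projB n x y : basis_proj n (x - y) = basis_proj n x - basis_proj n y.
Proof.
by rewrite (_ : x - y = (-1) *: y + x) ?basis_proj_lin ?scaleN1r 1?addrC.
Qed.

Lemma basis_proj0 n : basis_proj n 0 = 0.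
Proof. by rewrite -[X in basis_proj n X](subrr 0) basis_projB subrr. Qed.

Lemma basis_projZ n a x : basis_proj n (a *: x) = a *: basis_proj n x.
Proof. by rewrite -[a *: x]addr0 basis_proj_lin basis_proj0 addr0. Qed.

Lemma basis_projS n x : basis_proj n.+1 x = basis_proj n x + coef x n *: b n.
Proof. by rewrite /basis_proj /schauder_partial big_nat_recr. Qed.

Lemma basis_vector_neq0 k : b k != 0.
Proof.
apply/negP => /eqP bk0.
have partial_cst0 (beta : nat -> R) : (forall i, i != k -> beta i = 0) ->
    partial beta @ \oo --> (0 : X).
  move=> beta0; apply: cvg_near_cst; near=> n; apply: big1 => i _.
  by have [->|/beta0 ->] := eqVneq i k; rewrite ?bk0 ?scaler0 ?scale0r.
have indicator_k : (fun i => (i == k)%:R) = coef 0.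
  by apply: schauder_coef_unique; apply: partial_cst0 => i /negPf ->.
have zero : (fun=> 0) = coef 0.
  by apply: schauder_coef_unique; apply: partial_cst0.
have := congr1 (@^~ k) (etrans indicator_k (esym zero)).
by rewrite /= eqxx => /eqP; rewrite oner_eq0.
Unshelve. all: by end_near. Qed.

Definition proj_bounded_set (m : nat) : set X :=
  [set x | forall n, `|basis_proj n x| <= m%:R].

Lemma proj_bounded_set_cover x : exists m, proj_bounded_set m x.
Proof.
have [M [_ PM]] := cvg_seq_bounded (cvgP _ (basis_proj_cvg x)).
have M1 : `|M| + 1 > M by rewrite (le_lt_trans (ler_norm M)) // ltrDl.
exists (Num.truncn (`|M| + 1)).+1 => n.
by apply: le_trans (PM _ M1 n I) _; apply/ltW; exact: truncnS_gt.
Qed.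

(* Baire category theorem: the closed sets [closure (proj_bounded_set m)]
   cover [X], so one of them has nonempty interior. *)
Lemma proj_bounded_set_ball :
  exists m x0 rho, 0 < rho /\ ball x0 rho `<=` closure (proj_bounded_set m).
Proof.
have : ~ (forall m, dense (~` closure (proj_bounded_set m))).
  move=> dense_compl.
  have [x [_ x_notin]] : setT `&` \bigcap_m ~` closure (proj_bounded_set m) !=set0.
    apply: (Baire (fun m => conj (closed_openC (@closed_closure _ _)) (dense_compl m))).
      by exists 0.
    exact: openT.
  have [m xm] := proj_bounded_set_cover x.
  exact: (x_notin m I (subset_closure xm)).
move/existsNP => [m /denseNE [U [[x0 Ux0] U_open]]].
have /nbhs_ballP [rho /= rho_gt0 ball_U] := open_nbhs_nbhs Ux0.
exists m, x0, rho; split => // y /ball_U Uy; apply: contrapT => y_notin.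
have : (U `&` ~` closure (proj_bounded_set m)) y by [].
by rewrite U_open.
Qed.

Lemma proj_bounded_diff_approx : exists2 M : R, 0 <= M & exists2 rho : R, 0 < rho &
  forall z, `|z| < rho -> forall g, 0 < g ->
  exists y, (forall n, `|basis_proj n y| <= M) /\ `|z - y| < g.
Proof.
have [m [x0 [rho [rho_gt0 ball_sub]]]] := proj_bounded_set_ball.
exists (m%:R *+ 2) => //; exists rho => // z z_lt g g_gt0.
have near_bounded y : ball x0 rho y ->
    exists2 a, proj_bounded_set m a & `|y - a| < g / 2.
  move=> /ball_sub /(_ _ (nbhsx_ballx y (g / 2) _)) [|a [ma ya]].
    by rewrite divr_gt0.
  by exists a => //; move: ya; rewrite -ball_normE.
have [a ma za] : exists2 a, proj_bounded_set m a & `|x0 + z - a| < g / 2.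
  by apply: near_bounded; rewrite -ball_normE /ball_ /= opprD addrA subrr sub0r normrN.
have [a' ma' x0a'] := near_bounded x0 (ballxx _ rho_gt0).
exists (a - a'); split => [n|].
  by rewrite basis_projB (le_trans (ler_normB _ _)) // mulr2n lerD.
have -> : z - (a - a') = (x0 + z - a) - (x0 - a').
  by rewrite [RHS]addrC -[x0 + z - a]addrA [- (x0 - a')]opprB subrKA opprB addrCA.
by rewrite (le_lt_trans (ler_normB _ _)) // [g]splitr ltrD.
Qed.

Lemma basis_proj_approx : exists2 M : R, 0 <= M & forall e, exists y,
  (forall n, `|basis_proj n y| <= M * `|e|) /\ `|e - y| <= `|e| / 2.
Proof.
have [M M_ge0 [rho rho_gt0 approx]] := proj_bounded_diff_approx.
exists (M * 2 / rho); first by rewrite divr_ge0 ?mulr_ge0 // ltW.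
move=> e.
have [->|e_neq0] := eqVneq e 0.
  by exists 0; split => [n|]; rewrite ?basis_proj0 ?subrr !normr0 ?mulr0 ?mul0r.
have e_gt0 : 0 < `|e| by rewrite normr_gt0.
set s := rho / (`|e| * 2).
have s_gt0 : 0 < s by rewrite divr_gt0 ?mulr_gt0.
have se_lt : `|s *: e| < rho.
  rewrite normrZ gtr0_norm // (_ : s * _ = rho / 2); last by rewrite /s; field; rewrite gt_eqF.
  by rewrite ltr_pdivrMr // ltr_pMr // ltr1n.
have si_ge0 : 0 <= s^-1 by rewrite invr_ge0 ltW.
have [y [y_bound y_close]] := approx _ se_lt (rho / 4) (divr_gt0 rho_gt0 (ltr0n _ 4)).
exists (s^-1 *: y); split => [n|].
  rewrite basis_projZ normrZ gtr0_norm ?invr_gt0 //.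
  apply: le_trans (ler_wpM2l si_ge0 (y_bound n)) _.
  by rewrite /s invf_div [leRHS](_ : _ = `|e| * 2 / rho * M) //; field; rewrite gt_eqF.
rewrite -[e in e - _](scalerK (lt0r_neq0 s_gt0)) -scalerBr normrZ gtr0_norm ?invr_gt0 //.
apply: le_trans (ler_wpM2l si_ge0 (ltW y_close)) _.
rewrite /s invf_div [leRHS](_ : _ = `|e| * 2 / rho * (rho / 4)) //.
by field; rewrite gt_eqF.
Qed.

Lemma schauder_coef_cvg_of_cauchy {e : nat -> X} {B : nat -> R} : B @ \oo --> 0 ->
  (forall k I J, (I <= J)%N -> `|basis_proj k (e I) - basis_proj k (e J)| <= B I) ->
  forall k, cvgn (fun I => coef (e I) k).
Proof.
move=> B0 eB k; have bk_gt0 : 0 < `|b k| by rewrite normr_gt0 basis_vector_neq0.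
apply: (@cauchy_bound_cvg _ _ _ (fun I => 2 / `|b k| * B I)).
  by rewrite -(mulr0 (2 / `|b k|)); apply: cvgM => //; exact: cvg_cst.
move=> I J IJ; rewrite mulrAC ler_pdivlMr // -normrZ scalerBl.
have coefZ z : coef z k *: b k = basis_proj k.+1 z - basis_proj k z.
  by rewrite basis_projS addrC addKr.
rewrite !coefZ opprD opprK addrACA mulr_natl mulr2n.
apply: le_trans (ler_normD _ _) _.
by apply: lerD; [|rewrite addrC distrC]; exact: eB.
Qed.

(* The coefficients of [e I] converge to those of some [g]; the projections of
   [g] are [B I]-close to those of [e I], hence [g] expands [0], i.e. [g = 0]. *)
Lemma basis_proj_le_of_cauchy {e : nat -> X} {B : nat -> R} :
  e @ \oo --> 0 -> B @ \oo --> 0 ->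
  (forall k I J, (I <= J)%N -> `|basis_proj k (e I) - basis_proj k (e J)| <= B I) ->
  forall k I, `|basis_proj k (e I)| <= B I.
Proof.
move=> e0 B0 eB; have coef_cvg := schauder_coef_cvg_of_cauchy B0 eB.
pose g k := lim (coef (e I) k @[I --> \oo]).
have proj_cvg k : basis_proj k (e I) @[I --> \oo] --> partial g k.
  elim: k => [|k IH].
    rewrite /schauder_partial big_geq //.
    by under eq_fun do rewrite /basis_proj /schauder_partial big_geq //; exact: cvg_cst.
  under eq_fun do rewrite basis_projS.
  rewrite /schauder_partial big_nat_recr //=.
  by apply: cvgD => //; apply: cvgZ; [exact: coef_cvg | exact: cvg_cst].
have dist_le k I : `|partial g k - basis_proj k (e I)| <= B I.
  exact: cvg_dist_le_of_cauchy_bound (proj_cvg k) (eB k I).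
have g_partial0 : partial g @ \oo --> 0.
  apply/cvgrPdist_lt => eps eps_gt0.
  have eps2_gt0 : 0 < eps / 2 by rewrite divr_gt0.
  have Be0 : B I + `|e I| @[I --> \oo] --> 0 + `|0 : X|.
    by apply: cvgD => //; exact: cvg_norm.
  rewrite normr0 addr0 in Be0.
  have [I0 _ BeI0] := cvgr_dist_lt _ _ Be0 _ eps2_gt0.
  have := BeI0 I0 (leqnn _); rewrite sub0r normrN => /(le_lt_trans (ler_norm _)) BeI.
  apply: filterS (cvgr_dist_lt _ _ (basis_proj_cvg (e I0)) _ eps2_gt0) => k /= ek.
  have -> : partial g k = partial g k - basis_proj k (e I0)
      + (basis_proj k (e I0) - e I0) + e I0 by rewrite !addrA !subrK.
  rewrite sub0r normrN.
  apply: le_lt_trans (ler_normD _ _) _; rewrite [eps]splitr.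
  apply: le_lt_trans (lerD (ler_normD _ _) (lexx _)) _; rewrite distrC in ek.
  by have := dist_le k I0; lra.
have g0 : g = coef 0 := schauder_coef_unique g_partial0.
move=> k I; have := dist_le k I.
by rewrite g0 -/(basis_proj k 0) basis_proj0 sub0r normrN.
Qed.

(* Iterating [basis_proj_approx] writes [x] as a series whose partial
   projections are controlled by a geometric sequence. *)
Lemma basis_proj_bounded :
  exists2 C : R, 0 <= C & forall n x, `|basis_proj n x| <= C * `|x|.
Proof.
have [M M_ge0 approx] := basis_proj_approx.
have [next next_spec] := choice approx.
exists (M *+ 2); first by rewrite mulrn_wge0.
move=> n x; pose e i := iter i (fun z => z - next z) x.
have e_le i : `|e i| <= geometric `|x| 2^-1 i.
  elim: i => [|i IH] /=; first by rewrite expr0 mulr1.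
  apply: le_trans (next_spec (e i)).2 _.
  by rewrite exprS mulrCA [leLHS]mulrC ler_pM2l.
have e_cvg0 : e @ \oo --> 0.
  apply/norm_cvg0P/(@squeeze_cvgr _ _ _ _ (cst 0) (geometric `|x| 2^-1)).
  - by near=> i; rewrite normr_ge0 e_le.
  - exact: cvg_cst.
  - by apply: cvg_geometric; rewrite gtr0_norm ?invf_lt1 ?ltr1n.
have e_step k i :
    `|basis_proj k (e i) - basis_proj k (e i.+1)| <= M * `|x| * 2^-1 ^+ i.
  rewrite /= -/(e i) basis_projB opprB addrC subrK -mulrA.
  exact: le_trans ((next_spec _).1 k) (ler_wpM2l M_ge0 (e_le i)).
have B_cvg0 : geometric (M *+ 2 * `|x|) 2^-1 @ \oo --> 0.
  by apply: cvg_geometric; rewrite gtr0_norm ?invf_lt1 ?ltr1n.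
have := basis_proj_le_of_cauchy e_cvg0 B_cvg0 _ n 0%N.
rewrite /= expr0 mulr1; apply=> k I J IJ.
by rewrite /= mulrnAl; exact: half_pow_cauchy (e_step k) I J IJ.
Unshelve. all: by end_near. Qed.

Lemma schauder_coef_lipschitz k : exists L : R,
  forall x y, `|coef x k - coef y k| <= L * `|x - y|.
Proof.
have [C _ PC] := basis_proj_bounded.
have bk_gt0 : 0 < `|b k| by rewrite normr_gt0 basis_vector_neq0.
exists (C *+ 2 / `|b k|) => x y.
rewrite -schauder_coefB mulrAC ler_pdivlMr // -normrZ.
rewrite (_ : _ *: b k = basis_proj k.+1 (x - y) - basis_proj k (x - y)).
  by rewrite mulrnAl mulr2n (le_trans (ler_normB _ _)) // lerD.
by rewrite basis_projS addrAC subrr add0r.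
Qed.

Lemma coef_vec_continuous n : continuous (coef_vec b n : X -> 'rV[R]_n).
Proof.
have [L L_lip] := choice schauder_coef_lipschitz.
apply: (@lipschitz_continuous _ _ _ _ (\sum_(i < n) `|L i|)) => x y.
rewrite [`|_|]mx_normrE; apply: bigmax_le => [|ij _].
  by rewrite mulr_ge0 // sumr_ge0.
rewrite !mxE; apply: le_trans (L_lip _ _ _) _.
rewrite ler_wpM2r //; apply: le_trans (ler_norm _) _.
by rewrite (bigD1 ij.2) //= lerDl sumr_ge0.
Qed.

Lemma basis_proj_cvg_unif (K : set X) : compact K -> forall eta, 0 < eta ->
  \forall n \near \oo, forall x, K x -> `|basis_proj n x - x| <= eta.
Proof.
move=> K_compact eta eta_gt0.
have [C C_ge0 PC] := basis_proj_bounded.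
have C1_gt0 : 0 < C + 1 by rewrite ltr_wpDl.
set rho := eta / (2 * (C + 1)).
have rho_gt0 : 0 < rho by rewrite divr_gt0 ?mulr_gt0.
move: K_compact; rewrite compact_cover => /(_ X K (fun z => ball z rho)).
case=> [z _|x Kx|D _ K_cover]; first exact: ball_open.
  by exists x => //; exact: ballxx.
have eta2_gt0 : 0 < eta / 2 by rewrite divr_gt0.
have near_z z : \forall n \near \oo, `|basis_proj n z - z| < eta / 2.
  by apply: filterS (cvgr_dist_lt _ _ (basis_proj_cvg z) _ eta2_gt0) => n; rewrite distrC.
have [N0 _ D_close] := @filter_bigI _ _ D _ _ _ (fun z _ => near_z z).
exists N0 => // n N0n x Kx.
have [z Dz xz] := K_cover x Kx.
have zn := D_close n N0n z Dz; move: xz; rewrite -ball_normE /= distrC => xz.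
have -> : basis_proj n x - x = basis_proj n (x - z) + (basis_proj n z - z) + (z - x).
  by rewrite basis_projB !addrA !subrK.
apply: le_trans (ler_normD _ _) _; apply: le_trans (lerD (ler_normD _ _) (lexx _)) _.
have rho_eq : (C + 1) * rho = eta / 2 by rewrite /rho; field; rewrite gt_eqF.
have := le_trans (PC n (x - z)) (ler_wpM2l C_ge0 (ltW xz)).
by rewrite [`|z - x|]distrC; lra.
Qed.

End SchauderBasis.

Arguments basis_proj {R X} b n x.

Lemma lipschitz_cont_modulus (R : realType) (n m : nat)
    (g : 'rV[R]_n -> 'rV[R]_m) (L : R) :
  (forall v w, eucl_norm (g v - g w) <= L * eucl_norm (v - w)) ->
  cont_modulus (fun t => L * t) g.
Proof.
move=> g_lip; split; last by rewrite mulr0.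
by apply: (@lipschitz_continuous _ _ _ _ `|L|) => s t; rewrite -mulrBr normrM.
Qed.

Lemma universal_approximator_within {R : realType}
    {F : forall n m : nat, nat -> set ('rV[R]_n -> 'rV[R]_m)} {n m : nat}
    {g : 'rV[R]_n -> 'rV[R]_m} {omega : R -> R} {K : set 'rV[R]_n} {eps : R} :
  universal_approximator F -> cont_modulus omega g -> compact K -> 0 < eps ->
  exists c h, F n m c h /\ forall v, K v -> eucl_norm (g v - h v) < eps.
Proof.
move=> [_ [r [r_cvg r_approx]]] g_mod K_compact eps_gt0.
have [_ r0] := r_cvg n m omega K g_mod.1 K_compact.
have [c _ rc] := cvgr_dist_lt _ _ r0 _ eps_gt0.
have [h Fh h_approx] := r_approx n m g omega K c g_mod K_compact.
exists c, h; split => // v Kv; apply: le_lt_trans (h_approx v Kv) _.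
by have := rc c (leqnn _); rewrite sub0r normrN; exact: le_lt_trans (ler_norm _).
Qed.

Lemma simplex_combination_dist (R : realType) (V : normedModType R) (N : nat)
    (p : 'rV[R]_N) (w : 'I_N -> V) (y : V) (e : R) :
  simplex p -> (forall j, p 0 j != 0 -> `|y - w j| <= e) ->
  `|y - \sum_j p 0 j *: w j| <= e.
Proof.
move=> [p_ge0 p_sum1] w_close.
have -> : y - \sum_j p 0 j *: w j = \sum_j p 0 j *: (y - w j).
  by rewrite (eq_bigr _ (fun j _ => scalerBr _ _ _)) sumrB -scaler_suml p_sum1 scale1r.
rewrite -[e]mul1r -p_sum1 mulr_suml; apply: le_trans (ler_norm_sum _ _ _) _.
apply: ler_sum => j _; rewrite normrZ ger0_norm //.
have [->|pj] := eqVneq (p 0 j) 0; first by rewrite !mul0r.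
by rewrite ler_wpM2l // w_close.
Qed.

(* The point [0] is prepended only to make the net nonempty. *)
Lemma continuity_net {R : realType} {X Y : normedModType R} {f : X -> Y}
    {K : set X} {e : R} :
  continuous f -> compact K -> 0 < e ->
  exists N (c : 'I_N -> X) (d : 'I_N -> R), [/\ (0 < N)%N, forall j, 0 < d j,
    forall j x, `|c j - x| < d j -> `|f (c j) - f x| < e &
    forall x, K x -> exists j, `|c j - x| < d j / 2].
Proof.
move=> f_cont K_compact e_gt0.
have radius x : exists r : R, 0 < r /\ forall y, `|x - y| < r -> `|f x - f y| < e.
  have /nbhs_ballP [r /= r_gt0 ball_r] : \forall y \near x, `|f x - f y| < e.
    exact: cvgr_dist_lt (f_cont x) _ e_gt0.
  by exists r; split => // y xy; apply: ball_r; rewrite -ball_normE.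
have [d d_spec] := choice radius.
move: K_compact; rewrite compact_cover => /(_ X K (fun z => ball z (d z / 2))).
case=> [z _|x Kx|D _ K_cover]; first exact: ball_open.
  by exists x => //; apply: ballxx; rewrite divr_gt0 // (d_spec x).1.
pose s := 0 :: finmap.enum_fset D.
exists (size s), (fun j => nth 0 s j), (fun j => d (nth 0 s j)).
split => // [j|j x|x Kx]; [exact: (d_spec _).1 | exact: (d_spec _).2 |].
have [z Dz xz] := K_cover x Kx.
have zs : (index z s < size s)%N by rewrite index_mem in_cons Dz orbT.
exists (Ordinal zs); rewrite /= nth_index ?in_cons ?Dz ?orbT //.
by move: xz; rewrite -ball_normE.
Qed.

Definition basis_sum {R : realType} {X : normedModType R} (b : nat -> X) {n : nat}
    (v : 'rV[R]_n) : X :=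
  \sum_(i < n) v 0 i *: b i.

Lemma basis_sum_lipschitz (R : realType) (X : normedModType R) (b : nat -> X)
    (n : nat) (v w : 'rV[R]_n) :
  `|basis_sum b v - basis_sum b w| <= (\sum_(i < n) `|b i|) * eucl_norm (v - w).
Proof.
rewrite -sumrB mulr_suml; apply: le_trans (ler_norm_sum _ _ _) _.
apply: ler_sum => i _; rewrite -scalerBl normrZ mulrC ler_wpM2l //.
by have := normr_coord_le_eucl_norm (v - w) i; rewrite !mxE.
Qed.

Lemma basis_sum_coef_vec (R : realType) (X : completeNormedModType R) (b : nat -> X)
    (n : nat) (x : X) :
  basis_sum b (coef_vec b n x) = basis_proj b n x.
Proof.
by rewrite /basis_proj /schauder_partial big_mkord; apply: eq_bigr => i _; rewrite mxE.
Qed.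

Section ProximityScore.
Context {R : realType} {X : normedModType R} {N : nat} (c : 'I_N -> X) (d : 'I_N -> R).

Definition proximity_score (y : X) : 'rV[R]_N := \row_j (- (8 / d j) * `|y - c j|).

Lemma proximity_score_lipschitz y y' :
  eucl_norm (proximity_score y - proximity_score y') <= (\sum_j `|8 / d j|) * `|y - y'|.
Proof.
apply: le_trans (eucl_norm_le_sum_normr _) _; rewrite mulr_suml.
apply: ler_sum => j _; rewrite !mxE -mulrBr normrM normrN ler_wpM2l //.
by apply: le_trans (ler_dist_dist _ _) _; rewrite opprB addrA subrK.
Qed.

(* The score of [c k] is at most -7, that of [c j0] at least -5. *)
Lemma proximity_score_gap x y j0 k : 0 < d j0 -> 0 < d k ->
  `|y - x| <= d j0 / 8 -> `|y - x| <= d k / 8 ->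
  `|c j0 - x| < d j0 / 2 -> d k <= `|c k - x| ->
  proximity_score y 0 k + 2 <= proximity_score y 0 j0.
Proof.
move=> dj0_gt0 dk_gt0 yx_j0 yx_k xj0 xk; rewrite !mxE.
have near_j0 : `|y - c j0| <= d j0 * (5 / 8).
  by apply: le_trans (ler_distD x _ _) _; rewrite [`|x - _|]distrC; lra.
have far_k : d k * (7 / 8) <= `|y - c k|.
  by have := ler_distD y (c k) x; rewrite [`|c k - y|]distrC; lra.
have ratio_j0 : 8 / d j0 * `|y - c j0| <= 5.
  rewrite [leRHS](_ : 5 = 8 / d j0 * (d j0 * (5 / 8))); last by field; rewrite gt_eqF.
  by rewrite ler_wpM2l // divr_ge0 // ltW.
have ratio_k : 7 <= 8 / d k * `|y - c k|.
  rewrite [leLHS](_ : 7 = 8 / d k * (d k * (7 / 8))); last by field; rewrite gt_eqF.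
  by rewrite ler_wpM2l // divr_ge0 // ltW.
lra.
Qed.

Lemma proj_simplex_proximity_support {u : 'rV[R]_N} {x y : X} {k} :
  (forall j, 0 < d j) -> (forall j, `|y - x| <= d j / 8) ->
  (exists j0, `|c j0 - x| < d j0 / 2) ->
  eucl_norm (proximity_score y - u) < 2^-1 ->
  proj_simplex u 0 k != 0 -> `|c k - x| < d k.
Proof.
move=> d_gt0 yx [j0 xj0] u_close; apply: contraNT; rewrite -leNgt => xk.
apply/eqP; apply: (@proj_simplex_eq0_near _ _ u (proximity_score y) j0).
  move=> i; rewrite distrC; apply: le_trans (ltW u_close).
  by have := normr_coord_le_eucl_norm (proximity_score y - u) i; rewrite !mxE.
exact: proximity_score_gap.
Qed.

End ProximityScore.

Lemma localizing_approximator {R : realType} {X : completeNormedModType R}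
    {xb : nat -> X} {F : forall n m : nat, nat -> set ('rV[R]_n -> 'rV[R]_m)}
    {K : set X} {n N : nat} (c : 'I_N -> X) {d : 'I_N -> R} :
  schauder_basis xb -> universal_approximator F -> compact K -> (forall j, 0 < d j) ->
  (forall j x, K x -> `|basis_proj xb n x - x| <= d j / 8) ->
  exists c0 h, F n N c0 h /\ forall x k, K x -> (exists j0, `|c j0 - x| < d j0 / 2) ->
    proj_simplex (h (coef_vec xb n x)) 0 k != 0 -> `|c k - x| < d k.
Proof.
move=> xb_basis F_univ K_compact d_gt0 proj_close.
pose score (v : 'rV[R]_n) := proximity_score c d (basis_sum xb v).
pose L := (\sum_j `|8 / d j|) * \sum_(i < n) `|xb i|.
have score_mod : cont_modulus (fun t => L * t) score.
  apply: lipschitz_cont_modulus => v v'; rewrite -mulrA.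
  apply: le_trans (proximity_score_lipschitz _ _ _ _) _.
  by rewrite ler_wpM2l ?sumr_ge0 // basis_sum_lipschitz.
have K'_compact : compact (coef_vec xb n @` K).
  by apply: continuous_compact => //; apply/continuous_subspaceT/coef_vec_continuous.
have half_gt0 : 0 < 2^-1 :> R by rewrite invr_gt0.
have [c0 [h [Fh h_close]]] :=
  universal_approximator_within F_univ score_mod K'_compact half_gt0.
exists c0, h; split => // x k Kx x_covered pk.
apply: (proj_simplex_proximity_support c d (y := basis_proj xb n x) d_gt0 _ x_covered _ pk).
  by move=> j; exact: proj_close.
by rewrite -basis_sum_coef_vec; apply: h_close; exists x.
Qed.

Theorem mainTheorem14 (R : realType)
  (X Y : completeNormedModType R) (xb : nat -> X) (yb : nat -> Y)
  (F : forall n m : nat, nat -> set ('rV[R]_n -> 'rV[R]_m)) :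
  schauder_basis xb -> schauder_basis yb -> universal_approximator F ->
  forall (f : X -> Y), continuous f ->
  forall (eps : R), 0 < eps ->
  forall (K : set X), compact K ->
  exists n N Q : nat, [/\ (0 < n)%N, (0 < N)%N, (0 < Q)%N &
    exists (fhat : 'rV[R]_n -> 'rV[R]_N) (z : 'I_N -> 'I_Q -> R),
      (exists c : nat, F n N c fhat) /\
      let that := fun x : X =>
        \sum_(j < N) \sum_(i < Q)
          ((proj_simplex (fhat (coef_vec xb n x))) 0 j * z j i) *: yb i in
      (ereal_sup [set (`|f x - that x|)%:E | x in K] < eps%:E)%E].
Proof.
move=> xb_basis yb_basis F_univ f f_cont eps eps_gt0 K K_compact.
have e_gt0 : 0 < eps / 4 by rewrite divr_gt0.
have [N [c [d [N_gt0 d_gt0 f_close K_cover]]]] := continuity_net f_cont K_compact e_gt0.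
pose w j := schauder_partial yb (schauder_coef yb (f (c j))).
have [Q0 _ w_close] : \forall Q \near \oo, forall j, `|f (c j) - w j Q| < eps / 4.
  apply: filter_forall => j.
  exact: cvgr_dist_lt _ _ (basis_proj_cvg yb_basis (f (c j))) _ e_gt0.
have [n0 _ proj_close] : \forall n \near \oo,
    forall j x, K x -> `|basis_proj xb n x - x| <= d j / 8.
  by apply: filter_forall => j; apply: basis_proj_cvg_unif; rewrite ?divr_gt0.
set n := n0.+1; set Q := Q0.+1.
have [c0 [h [Fh h_local]]] :=
  localizing_approximator c xb_basis F_univ K_compact d_gt0 (proj_close n (leqnSn n0)).
exists n, N, Q; split => //.
exists h, (fun j i => schauder_coef yb (f (c j)) i); split; first by exists c0.
move=> that; apply: (@le_lt_trans _ _ (eps / 2)%:E); last by rewrite lte_fin; lra.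
apply: ge_ereal_sup => _ [x Kx <-]; rewrite lee_fin.
have -> : that x = \sum_j proj_simplex (h (coef_vec xb n x)) 0 j *: w j Q.
  apply: eq_bigr => j _; rewrite /w /schauder_partial big_mkord scaler_sumr.
  by apply: eq_bigr => i _; rewrite scalerA.
apply: simplex_combination_dist => [|j /(h_local x j Kx (K_cover x Kx)) /(f_close j x)].
  exact: proj_simplex_simplex.
have := ler_distD (f (c j)) (f x) (w j Q); rewrite [`|f x - f _|]distrC.
by have := w_close Q (leqnSn Q0) j; lra.
Qed.
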